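(* Let $K$ be a finite abstract simplicial complex with vertex set $V$, and let $\{U_1,\dots,U_m\}$ be a hard partition of $V$ (every vertex lies in exactly one $U_i$). Form the topological pooled complex $\mathrm{Nrv}(\mathcal{U})$ and the matrices $\mathbf{S}_{q,p}$, $\mathbf{S}_p:=\mathbf{S}_{p,p}$ of the matrix implementation, both as described in the context. Then the topological and matrix formulations produce the same pooled simplicial complex. Concretely: for every $p\ge 0$, the $p$-simplices of $\mathrm{Nrv}(\mathcal{U})$ are exactly the $p$-subsets $\tau$ of clusters that index the (nonzero) columns of $\mathbf{S}_p$; and for every $p\ge 1$ and all such $\tau_{p-1}$, $\tau_p$, the entry $\big(\mathbf{S}_{p-1}^T\,|\mathbf{B}_p|\,\mathbf{S}_p\big)[\tau_{p-1},\tau_p]$ is nonzero if and only if $\tau_{p-1}$ is a face of $\tau_p$ in $\mathrm{Nrv}(\mathcal{U})$, i.e. $\mathbf{S}_{p-1}^T|\mathbf{B}_p|\mathbf{S}_p$ has the same support as the non-oriented $p$-th boundary matrix of $\mathrm{Nrv}(\mathcal{U})$.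
   Context: A $p$-simplex is a set of $p+1$ vertices. For a vertex $v$ of $K$, its star is $St(v)=\{\sigma\in K: v\in\sigma\}$. Topological formulation: for each cluster put $\widetilde U_i=\bigcup_{v\in U_i}St(v)$ and $\mathcal{U}=\{\widetilde U_i\}_{i=1}^m$; the nerve $\mathrm{Nrv}(\mathcal{U})$ is the simplicial complex on vertex set $\{1,\dots,m\}$ (one vertex per cluster) whose simplices are the nonempty sets $\tau\subseteq\{1,\dots,m\}$ with $\bigcap_{i\in\tau}\widetilde U_i\neq\emptyset$. Matrix formulation: $|\mathbf{B}_p|$ denotes the non-oriented boundary matrix of $K$ (rows indexed by $(p-1)$-simplices, columns by $p$-simplices, entry $1$ if the row simplex is a face of the column simplex and $0$ otherwise). $\mathbf{S}_0$ is the $n_0\times m$ matrix with $\mathbf{S}_0[v,U_j]=1$ if $v\in U_j$ and $0$ otherwise. For $q>0$, $\mathbf{S}_{q,0}$ has rows indexed by $q$-simplices $\sigma$ of $K$ and columns by clusters, with $\mathbf{S}_{q,0}[\sigma,U_j]=1$ if $\mathbf{S}_0[v,U_j]=1$ for some vertex $v\in\sigma$, and $0$ otherwise. For $0<p\le q$, $\mathbf{S}_{q,p}$ has rows indexed by $q$-simplices of $K$ and a column for each set $\tau=\{U_{a_0},\dots,U_{a_p}\}$ of $p+1$ distinct clusters, given by the entrywise product $\mathbf{S}_{q,p}[\cdot,\tau]=\mathbf{S}_{q,0}[\cdot,U_{a_0}]\odot\cdots\odot\mathbf{S}_{q,0}[\cdot,U_{a_p}]$; columns that are identically zero are discarded (those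 $\tau$ are not simplices of the pooled complex). The block matrix assembled from the $\mathbf{S}_{q,p}$ ($p\le q$) may additionally be row-normalized so each row sums to $1$; this positive rescaling does not change supports. The pooled boundary matrices are $\mathbf{B}_p^{\mathrm{pooled}}=\mathbf{S}_{p-1}^T|\mathbf{B}_p|\mathbf{S}_p$. *)

(* finite sets over finTypes, nat-valued 0/1 matrices as functions. *)
From mathcomp Require Import all_boot.
Set Implicit Arguments.
Unset Strict Implicit.
Unset Printing Implicit Defensive.

Definition is_simplicial_complex (V : finType) (K : {set {set V}}) : Prop :=
  [/\ set0 \notin K,
      (forall s t : {set V}, s \in K -> t \subset s -> t != set0 -> t \in K)
    & (forall v : V, [set v] \in K)].

Definition hard_partition (V : finType) (m : nat) (U : 'I_m -> {set V}) : Prop :=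
  (forall i, U i != set0) /\ (forall v : V, exists! i, v \in U i).

Definition simplices (V : finType) (K : {set {set V}}) (p : nat) : {set {set V}} :=
  [set s in K | #|s| == p.+1].

Definition star (V : finType) (K : {set {set V}}) (v : V) : {set {set V}} :=
  [set s in K | v \in s].

Definition tildeU (V : finType) (K : {set {set V}}) (m : nat)
  (U : 'I_m -> {set V}) (i : 'I_m) : {set {set V}} :=
  \bigcup_(v in U i) star K v.

Definition nerve (V : finType) (K : {set {set V}}) (m : nat)
  (U : 'I_m -> {set V}) : {set {set 'I_m}} :=
  [set tau : {set 'I_m} | (tau != set0) &&
     (\bigcap_(i in tau) tildeU K U i != set0)].

Definition nerve_simplices (V : finType) (K : {set {set V}}) (m : nat)
  (U : 'I_m -> {set V}) (p : nat) : {set {set 'I_m}} :=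
  [set tau in nerve K U | #|tau| == p.+1].

(* non-oriented boundary |B_p| entry (row: (p-1)-simplex r, column: p-simplex s) *)
Definition absB (V : finType) (r s : {set V}) : nat := (r \subset s).

(* S_{q,0}[s, U_j] : 1 iff S_0[v,U_j] = 1 for some vertex v of s
   (for a 0-simplex s = {v} this is exactly S_0[v,U_j]). *)
Definition Sq0 (V : finType) (m : nat) (U : 'I_m -> {set V})
  (s : {set V}) (j : 'I_m) : nat := [exists v in s, v \in U j].

Definition Sqp (V : finType) (m : nat) (U : 'I_m -> {set V})
  (s : {set V}) (tau : {set 'I_m}) : nat := \prod_(a in tau) Sq0 U s a.

(* Columns of S_p := S_{p,p}: (p+1)-sets of clusters whose column (over the
   p-simplices of K) is not identically zero. *)
Definition Scols (V : finType) (K : {set {set V}}) (m : nat)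
  (U : 'I_m -> {set V}) (p : nat) : {set {set 'I_m}} :=
  [set tau : {set 'I_m} | (#|tau| == p.+1) &&
     [exists s in simplices K p, Sqp U s tau != 0]].

Definition pooledB (V : finType) (K : {set {set V}}) (m : nat)
  (U : 'I_m -> {set V}) (p : nat) (tau' tau : {set 'I_m}) : nat :=
  \sum_(r in simplices K p.-1) \sum_(s in simplices K p)
     Sqp U r tau' * absB r s * Sqp U s tau.

Definition nerve_absB (m : nat) (tau' tau : {set 'I_m}) : nat := (tau' \subset tau).

(* A hard partition is a map f sending each vertex to its cluster. Both the
   column tau of S_{q,p} at a simplex s and the membership of s in the tildeU_i,
   i in tau, say exactly that tau is contained in f(s). So the nerve consists of
   the tau contained in some f(s), s in K, while S_p only uses simplices s with
   #|s| = #|tau|; they agree because any tau contained in f(s) is the image of a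
   face of s with #|tau| vertices. For the boundary, a p-simplex s with tau in
   f(s) and #|s| = #|tau| has f(s) = tau, so a face r of s with tau' in f(r)
   gives tau' in tau; conversely a face tau' of tau = f(s) is the image of a
   (p-1)-face of s. *)
From mathcomp Require Import all_boot.
Set Implicit Arguments. Unset Strict Implicit.

Section ImageSets.
Variables (T I : finType) (f : T -> I).

Lemma subset_imset_section (s : {set T}) (A : {set I}) :
  A \subset f @: s ->
  exists t : {set T}, [/\ t \subset s, f @: t = A & #|t| = #|A|].
Proof.
move=> sAfs; have [s0 | [v0 _]] := set_0Vmem s.
  move: sAfs; rewrite s0 imset0 subset0 => /eqP ->.
  by exists set0; rewrite sub0set imset0 !cards0.
pose g i := odflt v0 [pick v in s | f v == i].
have gK i : i \in A -> g i \in s /\ f (g i) = i.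
  move=> /(subsetP sAfs) /imsetP [v vs ->]; rewrite /g.
  case: pickP => [w /andP [ws /eqP] // | no_pick].
  by have := no_pick v; rewrite vs eqxx.
exists (g @: A); split.
- by apply/subsetP => _ /imsetP [i iA ->]; case: (gK i iA).
- rewrite -imset_comp -[RHS]imset_id; apply: eq_in_imset => i iA /=.
  by case: (gK i iA).
- apply: card_in_imset => i j iA jA gij.
  by rewrite -(gK i iA).2 gij (gK j jA).2.
Qed.

Lemma subset_imset_card_eq (s : {set T}) (A : {set I}) :
  A \subset f @: s -> #|s| <= #|A| -> f @: s = A.
Proof.
move=> sAfs le_sA; apply/esym/eqP; rewrite eqEcard sAfs.
exact: leq_trans (leq_imset_card f s) le_sA.
Qed.

Lemma simplicial_face_onto (K : {set {set T}}) (s : {set T}) (A : {set I}) :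
  is_simplicial_complex K -> s \in K -> A \subset f @: s -> A != set0 ->
  exists t, [/\ t \in simplices K #|A|.-1, t \subset s & f @: t = A].
Proof.
case=> _ closedK _ sK /subset_imset_section [t [ts ftA ctA]] A0.
have A_gt0 : 0 < #|A| by rewrite card_gt0.
exists t; split=> //; rewrite inE prednK // ctA eqxx andbT.
by apply: (closedK s) => //; rewrite -card_gt0 ctA.
Qed.

End ImageSets.

Section Clusters.
Variables (V : finType) (K : {set {set V}}) (m : nat) (U : 'I_m -> {set V}).
Variable f : V -> 'I_m.
Hypothesis mem_U : forall v i, (v \in U i) = (f v == i).

Lemma Sqp_neq0 s tau : (Sqp U s tau != 0) = (tau \subset f @: s).
Proof.
have nat_of_andb : {morph nat_of_bool : b c / b && c >-> b * c} by move=> [] [].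
rewrite /Sqp /Sq0 -(big_morph _ nat_of_andb (erefl : nat_of_bool true = 1)).
rewrite big_andE eqb0 negbK.
apply/forall_inP/subsetP => [tau_s i /tau_s | tau_fs i].
  by case/exists_inP => v vs; rewrite mem_U => /eqP <-; apply: imset_f.
case/tau_fs/imsetP => v vs ->.
by apply/exists_inP; exists v; rewrite ?mem_U.
Qed.

Lemma mem_tildeU i s : (s \in tildeU K U i) = (s \in K) && (i \in f @: s).
Proof.
apply/bigcupP/andP => [[v] | [sK /imsetP [v vs ->]]].
  by rewrite mem_U inE => /eqP <- /andP [sK vs]; split; last apply: imset_f.
by exists v; rewrite ?mem_U // inE sK vs.
Qed.

Lemma mem_nerve tau :
  (tau \in nerve K U) = (tau != set0) && [exists s in K, tau \subset f @: s].
Proof.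
rewrite inE; case: eqP => //= /eqP tau0.
have [i0 i0tau] := set0Pn _ tau0.
apply/set0Pn/exists_inP => [[s /bigcapP s_tau] | [s sK sfs]].
  have /andP [sK _] : (s \in K) && (i0 \in f @: s) by rewrite -mem_tildeU s_tau.
  exists s => //; apply/subsetP => i /s_tau.
  by rewrite mem_tildeU => /andP [].
by exists s; apply/bigcapP => i itau; rewrite mem_tildeU sK (subsetP sfs).
Qed.

Lemma mem_Scols p tau :
  (tau \in Scols K U p) =
  (#|tau| == p.+1) && [exists s in simplices K p, tau \subset f @: s].
Proof.
by rewrite inE; congr (_ && _); apply: eq_existsb => s; rewrite Sqp_neq0.
Qed.

Lemma pooledB_neq0 p tau' tau :
  (pooledB K U p tau' tau != 0) =
  [exists r in simplices K p.-1, exists s in simplices K p,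
     [&& tau' \subset f @: r, r \subset s & tau \subset f @: s]].
Proof.
rewrite /pooledB sum_nat_eq0 negb_forall_in; apply: eq_existsb => r.
congr (_ && _); rewrite sum_nat_eq0 negb_forall_in; apply: eq_existsb => s.
by rewrite !muln_eq0 !negb_or !Sqp_neq0 /absB eqb0 negbK !andbA.
Qed.

Hypothesis K_simplicial : is_simplicial_complex K.

Lemma nerve_simplicesE p : nerve_simplices K U p = Scols K U p.
Proof.
apply/setP => tau; rewrite mem_Scols inE mem_nerve andbC.
have [ctau | //] := eqP; rewrite -card_gt0 ctau /=.
apply/exists_inP/exists_inP => [[s sK sfs] | [s]]; last first.
  by rewrite inE => /andP [sK _] sfs; exists s.
have tau0 : tau != set0 by rewrite -card_gt0 ctau.
have [t [tS _ ftau]] := simplicial_face_onto K_simplicial sK sfs tau0.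
by rewrite ctau in tS; exists t; rewrite ?ftau.
Qed.

Lemma pooledB_support p : 0 < p -> forall tau' tau,
  tau' \in Scols K U p.-1 -> tau \in Scols K U p ->
  (pooledB K U p tau' tau != 0) = (nerve_absB tau' tau != 0).
Proof.
move=> p_gt0 tau' tau; rewrite !mem_Scols prednK // pooledB_neq0 /nerve_absB.
move=> /andP [/eqP ctau' _] /andP [/eqP ctau /exists_inP [s0 s0S s0f]].
have image_eq s : s \in simplices K p -> tau \subset f @: s -> f @: s = tau.
  rewrite inE => /andP [_ /eqP cs] sfs.
  by apply: subset_imset_card_eq; rewrite ?cs ?ctau.
case: (tau' \subset tau) / idP => [tau'tau | not_face] /=; last first.
  apply/negbTE/exists_inP => [[r _ /exists_inP [s sS /and3P [r_f rs sfs]]]].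
  by apply: not_face; rewrite -(image_eq s sS sfs) (subset_trans r_f) ?imsetS.
have tau'0 : tau' != set0 by rewrite -card_gt0 ctau'.
rewrite -(image_eq s0 s0S s0f) in tau'tau.
have s0K : s0 \in K by move: s0S; rewrite inE => /andP [].
have [r [rS rs fr]] := simplicial_face_onto K_simplicial s0K tau'tau tau'0.
rewrite ctau' in rS; apply/exists_inP; exists r => //.
by apply/exists_inP; exists s0; rewrite // fr subxx rs.
Qed.

End Clusters.

Lemma hard_partition_cluster_map (V : finType) (m : nat) (U : 'I_m -> {set V}) :
  hard_partition U ->
  exists f : V -> 'I_m, forall v i, (v \in U i) = (f v == i).
Proof.
case=> _ unique_cluster.
have cluster v : exists i, v \in U i.
  by case: (unique_cluster v) => i [vi _]; exists i.
exists (fun v => xchoose (cluster v)) => v i.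
apply/idP/eqP => [vi | <-]; last exact: xchooseP (cluster v).
case: (unique_cluster v) => j [_ j_uniq].
by rewrite -(j_uniq _ vi) -(j_uniq _ (xchooseP (cluster v))).
Qed.

Theorem theorem4p1 (V : finType) (K : {set {set V}}) (m : nat)
  (U : 'I_m -> {set V}) :
  is_simplicial_complex K -> hard_partition U ->
  (forall p : nat, nerve_simplices K U p = Scols K U p) /\
  (forall p : nat, 1 <= p -> forall tau' tau : {set 'I_m},
     tau' \in Scols K U p.-1 -> tau \in Scols K U p ->
     (pooledB K U p tau' tau != 0) = (nerve_absB tau' tau != 0)).
Proof.
move=> K_simplicial /hard_partition_cluster_map [f mem_U]; split.
- exact: nerve_simplicesE mem_U K_simplicial.
- exact: pooledB_support mem_U K_simplicial.
Qed.
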